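(* Let $G$ be a finite connected graph with maximal vertex degree $d$ and diameter $D$. For any sign $\sigma$ on $G$ such that $(G,\sigma)$ satisfies $CD^{\sigma}(K,\infty)$, we have \[ (D+1)\left\lceil\frac{D+1}{2}\right\rceil\geq\frac{1}{4d(2\lambda^{\sigma}-K)}, \] where $\lambda^\sigma$ is the first (smallest) nonzero eigenvalue of $\Delta^\sigma$. If $\lambda^\sigma$ is not simple or $(G,\sigma)$ is balanced, then moreover \[ D\left\lceil\frac{D}{2}\right\rceil\geq\frac{1}{4d(2\lambda^{\sigma}-K)}. \]
   Context: $G=(V,E)$ is a finite simple connected graph with degrees $d_x$; a sign is $\sigma:E\to\{\pm1\}$, $\sigma_{xy}=\sigma(\{x,y\})$; $(G,\sigma)$ is balanced if every cycle has sign product $+1$. Signed Laplacian $\Delta^{\sigma}f(x)=\frac{1}{d_x}\sum_{y\sim x}(\sigma_{xy}f(y)-f(x))$; $\Delta$ is the case $\sigma\equiv+1$; eigenvalues: $-\Delta^\sigma f=\lambda f$, $f\neq 0$. $\Gamma^{\sigma}(f,g)=\frac12\{\Delta(fg)-g\Delta^{\sigma}f-f\Delta^{\sigma}g\}$, $\Gamma_2^{\sigma}(f,g)=\frac12\{\Delta\Gamma^{\sigma}(f,g)-\Gamma^{\sigma}(g,\Delta^{\sigma}f)-\Gamma^{\sigma}(f,\Delta^{\sigma}g)\}$. $CD^{\sigma}(K,\infty)$ means $\Gamma_2^{\sigma}(f,f)(x)\ge K\Gamma^\sigma(f,f)(x)$ for all $f:V\to\mathbb{R}$, $x\in V$. $\lceil\cdot\rceil$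 is the ceiling. *)

From HB Require Import structures.
From mathcomp Require Import all_boot all_order all_algebra.
From mathcomp Require Import reals.
Set Implicit Arguments. Unset Strict Implicit. Unset Printing Implicit Defensive.
Import Order.TTheory GRing.Theory Num.Theory.
Local Open Scope ring_scope.

(* A sign sigma is given as a function T -> T -> R, only its values on edges
   matter; it is required to be symmetric and {+1,-1}-valued on edges. *)

Section SignedGraph.
Variable R : realType.
Variable T : finType.
Variable e : rel T.

Definition simple_graph : Prop :=
  (forall x y, e x y = e y x) /\ (forall x, ~~ e x x).

Definition connected_graph : Prop := forall x y, connect e x y.

Definition is_sign (sigma : T -> T -> R) : Prop :=
  forall x y, e x y -> sigma x y = sigma y x /\ (sigma x y = 1 \/ sigma x y = -1).

Definition deg (x : T) : nat := #|[set y | e x y]|.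

Definition maxdeg : nat := \max_(x : T) deg x.

Fixpoint within (n : nat) (x y : T) : bool :=
  if n is n'.+1 then within n' x y || [exists z, e x z && within n' z y]
  else x == y.

(* graph distance (for a connected graph the minimum is attained below #|T|) *)
Definition dist (x y : T) : nat :=
  \big[minn/#|T|]_(n < #|T| | within n x y) (n : nat).

Definition diam : nat := \max_(x : T) \max_(y : T) dist x y.

Definition slap (sigma : T -> T -> R) (f : T -> R) (x : T) : R :=
  (deg x)%:R^-1 * \sum_(y | e x y) (sigma x y * f y - f x).

Definition lap (f : T -> R) (x : T) : R := slap (fun _ _ => 1) f x.

Definition sGamma (sigma : T -> T -> R) (f g : T -> R) (x : T) : R :=
  2^-1 * (lap (fun z => f z * g z) x - g x * slap sigma f x - f x * slap sigma g x).

Definition sGamma2 (sigma : T -> T -> R) (f g : T -> R) (x : T) : R :=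
  2^-1 * (lap (sGamma sigma f g) x
          - sGamma sigma g (slap sigma f) x - sGamma sigma f (slap sigma g) x).

Definition CD_inf (sigma : T -> T -> R) (K : R) : Prop :=
  forall (f : T -> R) (x : T), sGamma2 sigma f f x >= K * sGamma sigma f f x.

Definition is_eigenvalue (sigma : T -> T -> R) (lambda : R) : Prop :=
  exists f : T -> R, (exists x, f x != 0) /\
    forall x, - slap sigma f x = lambda * f x.

Definition first_nonzero_eigenvalue (sigma : T -> T -> R) (lambda : R) : Prop :=
  [/\ lambda != 0, is_eigenvalue sigma lambda &
      forall mu, mu != 0 -> is_eigenvalue sigma mu -> lambda <= mu].

Definition not_simple_eigenvalue (sigma : T -> T -> R) (lambda : R) : Prop :=
  exists f g : T -> R,
    (forall x, - slap sigma f x = lambda * f x) /\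
    (forall x, - slap sigma g x = lambda * g x) /\
    (forall a b : R, (forall x, a * f x + b * g x = 0) -> a = 0 /\ b = 0).

Definition cycle_sign (sigma : T -> T -> R) (c : seq T) : R :=
  \prod_(p <- zip c (rot 1 c)) sigma p.1 p.2.

Definition is_graph_cycle (c : seq T) : bool :=
  [&& (3 <= size c)%N, uniq c & cycle e c].

Definition balanced (sigma : T -> T -> R) : Prop :=
  forall c, is_graph_cycle c -> cycle_sign sigma c = 1.

End SignedGraph.

From HB Require Import structures.
From mathcomp Require Import all_boot all_order all_algebra.
From mathcomp Require Import reals boolp.
From mathcomp Require Import zify ring lra.
Import Order.TTheory GRing.Theory Num.Theory.
Set Implicit Arguments. Unset Strict Implicit. Unset Printing Implicit Defensive.

(* Normalize an eigenfunction f of lambda so that max |f| = f x0 = 1.  Under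
   CD^sigma(K, oo) the maximum principle applied to Gamma(f) + (2 lambda - K) f^2
   gives Gamma(f) <= 2 (2 lambda - K), so each vertex v bounds the squared defects
   (f y - sigma_vy f v)^2 of its edges by 2 d_v Gamma(f)(v) <= 4 d (2 lambda - K).
   Consecutive edges of a simple path share a vertex, hence along a simple path of
   length m on which the signed value of f drops from 1 to something <= 0, the
   defects sum to at least 1 while their squares sum to at most
   ceil(m/2) 4 d (2 lambda - K); Cauchy-Schwarz concludes.  A path of length
   <= D + 1 of this kind runs along a shortest path to an edge with sigma f f <= 0,
   which exists since switching f to |f| would contradict the orthogonality of
   switched eigenfunctions to the degree measure.  Length <= D suffices if a second
   eigenfunction vanishes at x0, or if (G, sigma) is balanced: it is then switching
   equivalent to the all-positive sign, and the same orthogonality yields a vertex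
   where the switched f is negative. *)

Section Walks.
Variables (T : finType) (e : rel T).

Lemma within_walk n x y : within e n x y ->
  exists2 p, path e x p & last x p = y /\ (size p <= n)%N.
Proof.
elim: n x => [|n IHn] x /=; first by move/eqP->; exists [::].
case/orP => [/IHn [p ? [? ?]] | /existsP [z /andP [exz /IHn [p ? [? ?]]]]].
  by exists p => //; split => //; apply: leqW.
by exists (z :: p) => /=; [rewrite exz | split].
Qed.

Lemma walk_within x p : path e x p -> within e (size p) x (last x p).
Proof.
elim: p x => [|z p IHp] x /=; first by rewrite eqxx.
by case/andP => exz pz; apply/orP; right; apply/existsP; exists z; rewrite exz IHp.
Qed.

Lemma uniq_walk_size_lt (x : T) (p : seq T) : uniq (x :: p) -> (size p < #|T|)%N.
Proof. by move=> xp_uniq; have := max_card (mem (x :: p)); rewrite (card_uniqP xp_uniq). Qed.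

Lemma shorten_walk x p : path e x p ->
  exists2 q, path e x q & [/\ last x q = last x p, uniq (x :: q) & (size q <= size p)%N].
Proof.
case/shortenP => q q_path xq_uniq q_sub; exists q => //; split => //.
by apply: uniq_leq_size q_sub; case/andP: xq_uniq.
Qed.

Lemma dist_le_walk x p : path e x p -> (size p < #|T|)%N -> (dist e x (last x p) <= size p)%N.
Proof.
move=> /walk_within w p_lt; rewrite /dist -minEnat.
exact: (@bigmin_le_cond _ _ _ _ (Ordinal p_lt) _ (fun i : 'I_#|T| => i : nat) w).
Qed.

Lemma within_dist x y n : within e n x y -> (n < #|T|)%N -> within e (dist e x y) x y.
Proof.
move=> w n_lt; rewrite /dist -minEnat.
rewrite (@bigmin_eq_arg _ _ _ _ (Ordinal n_lt) _ (fun i : 'I_#|T| => i : nat) w) /=.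
  by case: arg_minP.
by move=> i _; apply: ltnW.
Qed.

Lemma shortest_walk x y : connect e x y ->
  exists2 p, path e x p & [/\ last x p = y, uniq (x :: p) & size p = dist e x y].
Proof.
case/connectP => p0 /shorten_walk [p1 p1_path [<- xp1_uniq _]] ->.
have := within_dist (walk_within p1_path) (uniq_walk_size_lt xp1_uniq).
case/within_walk => p2 /shorten_walk [p p_path [p_last xp_uniq p_le]] [p2_last p2_le].
exists p => //; rewrite p_last p2_last; split => //.
apply/eqP; rewrite eqn_leq (leq_trans p_le p2_le) /=.
by have := dist_le_walk p_path (uniq_walk_size_lt xp_uniq); rewrite p_last p2_last.
Qed.

Lemma shortest_walk_mem x p y : path e x p -> uniq (x :: p) ->
  size p = dist e x (last x p) -> y \in x :: p ->
  (dist e x (last x p) <= dist e x y)%N -> y = last x p.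
Proof.
move=> p_path xp_uniq p_size y_in dist_le.
have j_le : (index y (x :: p) <= size p)%N.
  by rewrite -ltnS -[(size p).+1]/(size (x :: p)) index_mem.
set j := index y (x :: p) in j_le.
have [prefix_path prefix_last] : path e x (take j p) /\ last x (take j p) = y.
  split; first by move: p_path; rewrite -{1}(cat_take_drop j p) cat_path => /andP [].
  by rewrite (last_nth y) size_takel // -[x :: _]/(take j.+1 (x :: p)) nth_take // nth_index.
have prefix_uniq : uniq (x :: take j p).
  by move: xp_uniq; rewrite -{1}(cat_take_drop j p) -cat_cons cat_uniq => /andP [].
have := dist_le_walk prefix_path (uniq_walk_size_lt prefix_uniq).
rewrite prefix_last size_takel // => dist_y_le.
have j_eq : j = size p by apply/eqP; rewrite eqn_leq j_le p_size (leq_trans dist_le dist_y_le).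
by rewrite (last_nth x) -j_eq nth_index.
Qed.

Lemma dist_le_diam x y : (dist e x y <= diam e)%N.
Proof. by rewrite /diam (bigD1 x) //= (bigD1 y) //= -maxnA leq_maxl. Qed.

Lemma deg_gt0 x y : e x y -> (0 < deg e x)%N.
Proof. by move=> exy; apply/card_gt0P; exists y; rewrite inE. Qed.

Lemma deg_le_maxdeg x : (deg e x <= maxdeg e)%N.
Proof. by rewrite /maxdeg (bigD1 x) //= leq_maxl. Qed.

End Walks.

Local Open Scope ring_scope.

Lemma not_uniq_cat (T : eqType) (s : seq T) : ~~ uniq s ->
  exists s1 z s2 s3, s = s1 ++ z :: s2 ++ z :: s3.
Proof.
elim: s => [|a s IHs] //=; rewrite negb_and negbK => /orP [a_in | /IHs [s1 [z [s2 [s3 ->]]]]].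
  exists [::], a, (take (index a s) s), (drop (index a s).+1 s) => /=.
  by rewrite -{1}(cat_take_drop (index a s) s) (drop_nth a) ?index_mem // nth_index.
by exists (a :: s1), z, s2, s3.
Qed.

Lemma last_rev_belast (T : Type) (x : T) p : last (last x p) (rev (belast x p)) = x.
Proof. by case: p => //= y p; rewrite rev_cons last_rcons. Qed.

Section WalkSign.
Variables (R : realType) (T : finType) (e : rel T) (sigma : T -> T -> R).
Hypothesis e_sym : forall x y, e x y = e y x.
Hypothesis e_irrefl : forall x, ~~ e x x.
Hypothesis sigma_sign : is_sign e sigma.

(* Extending [sigma] by [1] off the edges makes it square to [1] everywhere,
   so that walk signs need no path hypotheses. *)
Definition edge_sign (a b : T) : R := if e a b then sigma a b else 1.

Lemma edge_signE a b : e a b -> edge_sign a b = sigma a b.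
Proof. by rewrite /edge_sign => ->. Qed.

Lemma sign_sqr a b : e a b -> sigma a b * sigma a b = 1.
Proof. by case/sigma_sign => _ [] ->; rewrite ?mulr1 ?mulrNN ?mulr1. Qed.

Lemma norm_sign a b : e a b -> `|sigma a b| = 1.
Proof. by case/sigma_sign => _ [] ->; rewrite ?normrN normr1. Qed.

Lemma edge_sign_sqr a b : edge_sign a b * edge_sign a b = 1.
Proof. by rewrite /edge_sign; case: ifP => [/sign_sqr|_]; rewrite ?mulr1. Qed.

Lemma edge_sign_sym a b : edge_sign a b = edge_sign b a.
Proof.
rewrite /edge_sign e_sym; case: ifP => // eba.
by case: (sigma_sign eba).
Qed.

Fixpoint walk_sign (x : T) (p : seq T) : R :=
  if p is y :: q then edge_sign x y * walk_sign y q else 1.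

Lemma walk_sign_cat x p q :
  walk_sign x (p ++ q) = walk_sign x p * walk_sign (last x p) q.
Proof. by elim: p x => [|y p IHp] x /=; rewrite ?mul1r // IHp mulrA. Qed.

Lemma walk_sign_rcons x p y :
  walk_sign x (rcons p y) = walk_sign x p * edge_sign (last x p) y.
Proof. by rewrite -cats1 walk_sign_cat /= mulr1. Qed.

Lemma walk_sign_sqr x p : walk_sign x p * walk_sign x p = 1.
Proof.
by elim: p x => [|y p IHp] x /=; rewrite ?mulr1 // mulrACA edge_sign_sqr IHp mulr1.
Qed.

Lemma walk_sign_rev x p : walk_sign (last x p) (rev (belast x p)) = walk_sign x p.
Proof.
elim: p x => [|y p IHp] x //=.
by rewrite rev_cons walk_sign_rcons IHp mulrC edge_sign_sym last_rev_belast.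
Qed.

Lemma walk_sign_switch (tau : T -> R) x p :
  (forall a b, e a b -> sigma a b = tau a * tau b) -> (forall z, tau z * tau z = 1) ->
  path e x p -> walk_sign x p = tau x * tau (last x p).
Proof.
move=> sigma_tau tau_sqr; elim: p x => [|y p IHp] x /=; first by rewrite tau_sqr.
case/andP => exy y_path; rewrite IHp // edge_signE // sigma_tau //.
by rewrite -mulrA (mulrA (tau y)) tau_sqr mul1r.
Qed.

Lemma prod_sign_zip_rcons x p w : path e x p ->
  \prod_(q <- zip (x :: p) (rcons p w)) sigma q.1 q.2 = walk_sign x p * sigma (last x p) w.
Proof.
elim: p x => [|y p IHp] x /=; first by rewrite big_seq1 mul1r.
by case/andP => exy y_path; rewrite big_cons IHp // edge_signE // mulrA.
Qed.

Lemma cycle_sign_walk y r : path e y r -> e (last y r) y ->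
  cycle_sign sigma (y :: r) = walk_sign (last y r) (y :: r).
Proof.
by move=> y_path e_last; rewrite /cycle_sign rot1_cons prod_sign_zip_rcons //= edge_signE // mulrC.
Qed.

Lemma closed_walk_sign x p : balanced e sigma -> path e x p -> last x p = x ->
  walk_sign x p = 1.
Proof.
move=> sigma_bal; have [n] := ubnP (size p); elim: n x p => // n IHn x p.
have [p_uniq|/not_uniq_cat [p1 [z [p2 [p3 ->]]]]] := boolP (uniq p); last first.
  rewrite !(size_cat, cat_path, last_cat) /= !(size_cat, cat_path, last_cat) /=.
  move=> size_lt /and5P [p1_path e1 p2_path e2 p3_path] p3_last.
  have -> : walk_sign x (p1 ++ z :: p2 ++ z :: p3) =
      walk_sign x (p1 ++ z :: p3) * walk_sign z (rcons p2 z).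
    by rewrite !walk_sign_cat /= walk_sign_cat walk_sign_rcons /=; ring.
  rewrite (IHn x) ?(IHn z) ?mulr1 ?size_rcons ?rcons_path ?p2_path ?last_rcons //;
    rewrite ?size_cat ?cat_path ?p1_path /= ?e1 ?last_cat //; lia.
case: p p_uniq => [|y [|y' r]] //= yr_uniq.
  by move=> _ /andP [+ _] yx; rewrite yx (negbTE (e_irrefl x)).
move=> _ /andP [exy yr_path] yr_last.
case: r yr_uniq yr_path yr_last => [|w r] yr_uniq yr_path yr_last.
  by rewrite -yr_last /= mulr1 edge_sign_sym edge_sign_sqr.
have e_last : e (last y [:: y', w & r]) y by rewrite -[last _ _]/(last y' (w :: r)) yr_last.
rewrite -{1}yr_last -[LHS]/(walk_sign (last y [:: y', w & r]) [:: y, y', w & r]).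
rewrite -cycle_sign_walk //.
apply: sigma_bal; apply/and3P; split => //.
by rewrite (cycle_path y); apply/andP.
Qed.

Lemma balanced_switching (x0 : T) : (forall x y, connect e x y) -> balanced e sigma ->
  exists2 tau : T -> R, forall z, tau z * tau z = 1 &
    forall a b, e a b -> sigma a b = tau a * tau b.
Proof.
move=> e_conn sigma_bal.
have walk_to v : exists p, path e x0 p && (last x0 p == v).
  by case/connectP: (e_conn x0 v) => p p_path ->; exists p; rewrite p_path eqxx.
pose P v := xchoose (walk_to v).
have [P_path P_last] : (forall v, path e x0 (P v)) /\ (forall v, last x0 (P v) = v).
  by split => v; have /andP [? /eqP] := xchooseP (walk_to v).
exists (fun v => walk_sign x0 (P v)) => [z|a b eab]; first exact: walk_sign_sqr.
pose round := P a ++ last x0 (P b) :: rev (belast x0 (P b)).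
have round_path : path e x0 round.
  rewrite cat_path P_path /= !P_last eab /= -{1}(P_last b) rev_path.
  by rewrite (eq_path (e' := e)) // => u v /=; rewrite e_sym.
have := closed_walk_sign sigma_bal round_path.
rewrite last_cat /= last_rev_belast walk_sign_cat /= walk_sign_rev !P_last edge_signE //.
move=> /(_ erefl) round_sign.
rewrite -[LHS]mulr1 -(walk_sign_sqr x0 (P a)) -[LHS]mulr1 -(walk_sign_sqr x0 (P b)).
by rewrite -[RHS]mulr1 -round_sign; ring.
Qed.

Definition defect (f : T -> R) (a b : T) : R := f b - edge_sign a b * f a.

Lemma defect_sqr_sym f a b : defect f a b ^+ 2 = defect f b a ^+ 2.
Proof.
have -> : defect f b a = - edge_sign a b * defect f a b.
  rewrite /defect edge_sign_sym.
  transitivity (f a * (edge_sign a b * edge_sign a b) - edge_sign a b * f b); last by ring.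
  by rewrite edge_sign_sqr mulr1.
by rewrite exprMn sqrrN [edge_sign _ _ ^+ 2]expr2 edge_sign_sqr mul1r.
Qed.

Lemma walk_defect_sum_ge f s x p : s * s = 1 ->
  s * f x - s * walk_sign x p * f (last x p) <=
  \sum_(q <- zip (x :: p) p) `|defect f q.1 q.2|.
Proof.
elim: p s x => [|y p IHp] s x s_sqr /=; first by rewrite big_nil mulr1 subrr.
rewrite big_cons /=.
have s'_sqr : (s * edge_sign x y) * (s * edge_sign x y) = 1.
  by rewrite mulrACA s_sqr edge_sign_sqr mulr1.
have step : s * f x - s * edge_sign x y * f y <= `|defect f x y|.
  have -> : s * f x - s * edge_sign x y * f y = - (s * edge_sign x y) * defect f x y.
    transitivity (s * f x * (edge_sign x y * edge_sign x y) - s * edge_sign x y * f y); last first.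
      by rewrite /defect; ring.
    by rewrite edge_sign_sqr mulr1.
  have norm_s' : `|s * edge_sign x y| = 1.
    by apply/eqP; rewrite -sqrp_eq1 // -normrX expr2 s'_sqr normr1.
  by apply: le_trans (ler_norm _) _; rewrite normrM normrN norm_s' mul1r.
have := IHp _ y s'_sqr; rewrite mulrA; lra.
Qed.

Lemma walk_defect_sqr_le f (B : R) x p :
  (forall v, \sum_(y | e v y) defect f v y ^+ 2 <= B) ->
  path e x p -> uniq (x :: p) ->
  \sum_(q <- zip (x :: p) p) defect f q.1 q.2 ^+ 2 <= (uphalf (size p))%:R * B.
Proof.
move=> vertex_le; have [n] := ubnP (size p).
elim: n x p => // n IHn x [|v [|w r]] /= size_lt; rewrite ?big_nil ?mul0r //.
  rewrite big_seq1 mul1r => /andP [exv _] _; apply: le_trans (vertex_le x).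
  by rewrite (bigD1 v) //= lerDl sumr_ge0 // => y _; apply: sqr_ge0.
move=> /and3P [exv evw r_path] /and4P [x_notin _ w_notin r_uniq].
have xw : x != w by apply: contraNneq x_notin => ->; rewrite !inE eqxx orbT.
have pair_le : defect f x v ^+ 2 + defect f v w ^+ 2 <= B.
  apply: le_trans (vertex_le v); rewrite defect_sqr_sym // (bigD1 x) 1?e_sym //=.
  rewrite (bigD1 w) /= ?evw 1?eq_sym // addrA lerDl.
  by apply: sumr_ge0 => y _; apply: sqr_ge0.
have wr_uniq : uniq (w :: r) by rewrite /= w_notin.
have := IHn w r (ltnW (ltnSE size_lt)) r_path wr_uniq.
rewrite !big_cons /= -natr1 mulrDl mul1r; lra.
Qed.

End WalkSign.

Section Laplacian.
Variables (R : realType) (T : finType) (e : rel T).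
Implicit Types (sigma : T -> T -> R) (f g : T -> R).

Lemma slapD sigma f g x :
  slap e sigma (fun z => f z + g z) x = slap e sigma f x + slap e sigma g x.
Proof.
rewrite /slap -mulrDr -big_split; congr (_ * _); by apply: eq_bigr => y _ /=; ring.
Qed.

Lemma slapZ sigma c f x : slap e sigma (fun z => c * f z) x = c * slap e sigma f x.
Proof.
rewrite /slap [RHS]mulrCA [in RHS]mulr_sumr; congr (_ * _).
by apply: eq_bigr => y _ /=; ring.
Qed.

Definition eigenfunction sigma (lambda : R) f := forall z, - slap e sigma f z = lambda * f z.

Lemma slap_eigen sigma lambda f x :
  eigenfunction sigma lambda f -> slap e sigma f x = - (lambda * f x).
Proof. by move=> f_eigen; rewrite -f_eigen opprK. Qed.

Lemma deg_slap sigma f x :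
  (deg e x)%:R * slap e sigma f x = \sum_(y | e x y) (sigma x y * f y - f x).
Proof.
rewrite /slap mulrA; have [deg0|deg_pos] := posnP (deg e x).
  rewrite deg0 !mul0r big_pred0 // => y; apply/negbTE/negP => /deg_gt0.
  by rewrite deg0.
by rewrite mulfV ?mul1r // pnatr_eq0 -lt0n.
Qed.

Lemma lap_le0_at_max f x : (forall y, f y <= f x) -> lap e f x <= 0.
Proof.
move=> f_max; rewrite /lap /slap mulr_ge0_le0 ?invr_ge0 //.
by apply: sumr_le0 => y _; rewrite mul1r subr_le0.
Qed.

Lemma sum_deg_lap f : (forall x y, e x y = e y x) ->
  \sum_x (deg e x)%:R * lap e f x = 0.
Proof.
move=> e_sym; under eq_bigr do rewrite deg_slap sumrB.
rewrite sumrB; apply/eqP; rewrite subr_eq0; apply/eqP.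
rewrite (exchange_big_dep predT) //=; apply: eq_bigr => y _.
by apply: eq_big => [x|x _]; rewrite ?mul1r // e_sym.
Qed.

Lemma lap_switch sigma (tau : T -> R) f x :
  (forall a b, e a b -> sigma a b = tau a * tau b) -> (forall z, tau z * tau z = 1) ->
  lap e (fun z => tau z * f z) x = tau x * slap e sigma f x.
Proof.
move=> sigma_tau tau_sqr; rewrite /lap /slap [RHS]mulrCA [in RHS]mulr_sumr.
congr (_ * _).
by apply: eq_bigr => y exy; rewrite sigma_tau // mul1r mulrBr !mulrA tau_sqr mul1r.
Qed.

End Laplacian.

Section CarreDuChamp.
Variables (R : realType) (T : finType) (e : rel T) (sigma : T -> T -> R).
Implicit Types (f : T -> R) (lambda : R).

Lemma deg_sGamma f x : is_sign e sigma ->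
  2 * (deg e x)%:R * sGamma e sigma f f x = \sum_(y | e x y) defect e sigma f x y ^+ 2.
Proof.
move=> sigma_sign.
transitivity ((deg e x)%:R * lap e (fun z => f z * f z) x -
              2 * f x * ((deg e x)%:R * slap e sigma f x)).
  by rewrite /sGamma; field.
rewrite /lap !deg_slap mulr_sumr -sumrB; apply: eq_bigr => y exy.
rewrite /defect edge_signE //.
transitivity ((f y - sigma x y * f x) ^+ 2 + (1 - sigma x y * sigma x y) * f x ^+ 2).
  by ring.
by rewrite (sign_sqr sigma_sign exy) subrr mul0r addr0.
Qed.

Lemma sGamma_scale f c x :
  sGamma e sigma f (fun z => c * f z) x = c * sGamma e sigma f f x.
Proof.
rewrite /sGamma slapZ (_ : (fun z => f z * (c * f z)) = (fun z => c * (f z * f z))).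
  by rewrite /lap slapZ; ring.
by apply: funext => z; ring.
Qed.

Lemma sGamma_eigen lambda f x : eigenfunction e sigma lambda f ->
  sGamma e sigma f f x = 2^-1 * lap e (fun z => f z * f z) x + lambda * (f x * f x).
Proof. by move=> f_eigen; rewrite /sGamma (slap_eigen _ f_eigen); field. Qed.

Lemma sGamma2_eigen lambda f x : eigenfunction e sigma lambda f ->
  sGamma2 e sigma f f x = 2^-1 * lap e (sGamma e sigma f f) x + lambda * sGamma e sigma f f x.
Proof.
move=> f_eigen; rewrite /sGamma2 (_ : slap e sigma f = fun z => - lambda * f z).
  by rewrite sGamma_scale; field.
by apply: funext => z; rewrite (slap_eigen _ f_eigen) mulNr.
Qed.

End CarreDuChamp.

Lemma sqr_sum_le_size (R : realFieldType) (I : Type) (s : seq I) (u : I -> R) :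
  (\sum_(i <- s) u i) ^+ 2 <= (size s)%:R * \sum_(i <- s) u i ^+ 2.
Proof.
elim: s => [|a s IHs]; first by rewrite !big_nil expr0n /= mul0r.
rewrite !big_cons /= -natr1.
have sum_sqr_ge0 : 0 <= \sum_(i <- s) u i ^+ 2 by apply: sumr_ge0 => i _; apply: sqr_ge0.
have size_ge0 : 0 <= (size s)%:R :> R by [].
move: IHs sum_sqr_ge0 size_ge0.
set S := \sum_(i <- s) u i; set Q := \sum_(i <- s) _; set n := (size s)%:R.
have [-> IHs Q_ge0 _|n_neq0 IHs Q_ge0 n_ge0] := eqVneq n 0.
  have -> : S = 0 by apply/eqP; rewrite -sqrf_eq0 eq_le sqr_ge0 andbT -(mul0r Q).
  by rewrite addr0 add0r mul1r lerDl.
have n_gt0 : 0 < n by rewrite lt_def n_neq0.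
have := sqr_ge0 (n * u a - S); rewrite !expr2 in IHs * => sq_ge0.
nra.
Qed.

Lemma ceil_half (R : realType) (M : nat) : Num.ceil (M%:R / 2 : R) = (uphalf M)%:Z.
Proof.
have twice : (uphalf M)%:R * 2 = (odd M)%:R + M%:R :> R.
  by rewrite -natrM -natrD muln2 uphalfK.
have odd_le1 : (odd M)%:R <= 1 :> R by rewrite lern1 leq_b1.
apply: ceil_def; rewrite rmorphB /= -[1%:~R]/(1 : R) -[(uphalf M)%:Z%:~R]/((uphalf M)%:R).
have odd_ge0 : 0 <= (odd M)%:R :> R by [].
by rewrite ltr_pdivlMr // ler_pdivrMr //; apply/andP; split; lra.
Qed.

Lemma ceil_half_bound (R : realType) (m M : nat) (B : R) : (m <= M)%N ->
  1 <= m%:R * (uphalf m)%:R * B -> 1 / B <= M%:R * (Num.ceil (M%:R / 2 : R))%:~R.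
Proof.
move=> m_le one_le; rewrite ceil_half -[(uphalf M)%:Z%:~R]/((uphalf M)%:R).
have B_gt0 : 0 < B.
  rewrite ltNge; apply/negP => B_le0.
  have : m%:R * (uphalf m)%:R * B <= 0 by apply: mulr_ge0_le0; rewrite ?mulr_ge0.
  lra.
rewrite ler_pdivrMr // (le_trans one_le) //; apply: ler_wpM2r; first exact: ltW.
by rewrite -!natrM ler_nat leq_mul // uphalf_leq.
Qed.

Lemma ceil_half_bound_nonpos (R : realType) (M : nat) (B : R) : B <= 0 ->
  1 / B <= M%:R * (Num.ceil (M%:R / 2 : R))%:~R.
Proof.
move=> B_le0; rewrite ceil_half -[(uphalf M)%:Z%:~R]/((uphalf M)%:R).
by apply: (@le_trans _ _ 0); rewrite ?div1r ?invr_le0 // -natrM.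
Qed.

Lemma weighted_sum0_neg (R : realFieldType) (T : finType) (w g : T -> R) x0 :
  (forall z, 0 <= w z) -> 0 < w x0 * g x0 -> \sum_z w z * g z = 0 ->
  exists z, g z < 0.
Proof.
move=> w_ge0 wg_x0 sum0; have [z g_z|g_ge0] := pickP (fun z => g z < 0).
  by exists z.
suff : 0 < \sum_z w z * g z by rewrite sum0 ltxx.
rewrite (bigD1 x0) //=; apply: (lt_le_trans wg_x0); rewrite lerDl.
by apply: sumr_ge0 => z _; rewrite mulr_ge0 // leNgt g_ge0.
Qed.

Section Eigenfunctions.
Variables (R : realType) (T : finType) (e : rel T) (sigma : T -> T -> R) (lambda : R).

Lemma normalized_eigenfunction h t : eigenfunction e sigma lambda h -> h t != 0 ->
  exists f x0, [/\ eigenfunction e sigma lambda f, f x0 = 1, forall z, `|f z| <= 1 &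
                   forall z, h z = 0 -> f z = 0].
Proof.
move=> h_eigen h_t; have [x0 _ h_max] := @arg_maxP _ _ _ t predT (fun z => `|h z|) isT.
have h_x0 : h x0 != 0 by rewrite -normr_gt0 (lt_le_trans _ (h_max t isT)) ?normr_gt0.
exists (fun z => (h x0)^-1 * h z), x0; split => [z||z|z ->]; rewrite ?mulr0 ?mulVf //.
  by rewrite slapZ -mulrN h_eigen mulrCA.
by rewrite normrM normfV ler_pdivrMl ?normr_gt0 // mulr1; apply: h_max.
Qed.

Lemma not_simple_vanishing t : not_simple_eigenvalue e sigma lambda ->
  exists2 h, eigenfunction e sigma lambda h & h t = 0 /\ exists x, h x != 0.
Proof.
move=> [f [g [f_eigen [g_eigen indep]]]].
have nonzero a b : (a != 0) || (b != 0) -> exists x, a * f x + b * g x != 0.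
  move=> ab; apply/existsP; apply: contraTT ab => /existsPn comb0.
  by have [-> ->] := indep a b (fun x => eqP (negbNE (comb0 x))); rewrite eqxx.
have [f_t0 | f_t] := eqVneq (f t) 0.
  exists f => //; split => //; have [|x] := nonzero 1 0; first by rewrite oner_eq0.
  by rewrite mul1r mul0r addr0; exists x.
exists (fun z => g t * f z + (- f t) * g z) => [z|]; last first.
  by split; [ring | apply: nonzero; rewrite oppr_eq0 f_t orbT].
by rewrite slapD !slapZ !(slap_eigen _ f_eigen) !(slap_eigen _ g_eigen); ring.
Qed.

Lemma switched_eigenfunction_sum (tau f : T -> R) :
  (forall x y, e x y = e y x) -> (forall a b, e a b -> sigma a b = tau a * tau b) ->
  (forall z, tau z * tau z = 1) -> eigenfunction e sigma lambda f -> lambda != 0 ->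
  \sum_x (deg e x)%:R * (tau x * f x) = 0.
Proof.
move=> e_sym sigma_tau tau_sqr f_eigen lambda_neq0.
have : \sum_x (deg e x)%:R * lap e (fun z => tau z * f z) x =
       - lambda * \sum_x (deg e x)%:R * (tau x * f x).
  rewrite mulr_sumr; apply: eq_bigr => x _.
  by rewrite (lap_switch _ _ sigma_tau tau_sqr) (slap_eigen _ f_eigen); ring.
rewrite sum_deg_lap // => /esym /eqP; rewrite mulf_eq0 oppr_eq0 (negbTE lambda_neq0).
by move/eqP.
Qed.

End Eigenfunctions.

Section NormalizedEigenfunction.
Variables (R : realType) (T : finType) (e : rel T) (sigma : T -> T -> R) (K lambda : R).
Variables (f : T -> R) (x0 : T).
Hypothesis e_sym : forall x y, e x y = e y x.
Hypothesis sigma_sign : is_sign e sigma.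
Hypothesis sigma_CD : CD_inf e sigma K.
Hypothesis f_eigen : eigenfunction e sigma lambda f.
Hypothesis f_x0 : f x0 = 1.
Hypothesis f_le1 : forall z, `|f z| <= 1.
Hypothesis lambda_neq0 : lambda != 0.

Lemma lambdaE : lambda = - slap e sigma f x0.
Proof. by rewrite f_eigen f_x0 mulr1. Qed.

Lemma deg_x0_gt0 : (0 < deg e x0)%N.
Proof.
rewrite lt0n; apply: contra lambda_neq0 => /eqP deg0.
by rewrite lambdaE /slap deg0 invr0 mul0r oppr0.
Qed.

Lemma lambda_gt0 : 0 < lambda.
Proof.
rewrite lt_def lambda_neq0 lambdaE /slap -mulrN mulr_ge0 ?invr_ge0 //.
rewrite -sumrN sumr_ge0 // => y exy; rewrite f_x0 opprB subr_ge0.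
apply: le_trans (ler_norm _) _.
by rewrite normrM (norm_sign sigma_sign exy) mul1r.
Qed.

Lemma sGamma_le x : 0 < 2 * lambda - K -> sGamma e sigma f f x <= 2 * (2 * lambda - K).
Proof.
set a := 2 * lambda - K => a_gt0.
have sqr_f_le1 z : f z * f z <= 1.
  by rewrite -expr2 -real_normK ?num_real // expr2 mulr_ile1 ?normr_ge0 ?f_le1.
have sqr_f_ge0 z : 0 <= f z * f z by rewrite -expr2 sqr_ge0.
pose G := sGamma e sigma f f; pose H z := G z + a * (f z * f z).
have [x1 _ H_max] := @arg_maxP _ _ _ x predT H isT.
have G_x1_le : G x1 <= a * (f x1 * f x1).
  have lapH_le0 : lap e G x1 + a * lap e (fun z => f z * f z) x1 <= 0.
    by rewrite /lap -slapZ -slapD; apply: lap_le0_at_max => y; apply: H_max.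
  have := sigma_CD f x1; rewrite (sGamma2_eigen _ f_eigen) -/G => CD_x1.
  have lap_sqr : lap e (fun z => f z * f z) x1 = 2 * G x1 - 2 * lambda * (f x1 * f x1).
    by rewrite /G (sGamma_eigen x1 f_eigen); field.
  rewrite lap_sqr in lapH_le0.
  have : lambda * (G x1 - a * (f x1 * f x1)) <= 0 by rewrite /a in lapH_le0 *; lra.
  by rewrite pmulr_rle0 ?lambda_gt0 // subr_le0.
have H_x_le : H x <= H x1 := H_max x isT.
have := sqr_f_le1 x1; have := sqr_f_ge0 x; rewrite /H -/(G x) in H_x_le *; nra.
Qed.

Lemma walk_bound p M : path e x0 p -> uniq (x0 :: p) ->
  walk_sign e sigma x0 p * f (last x0 p) <= 0 -> (size p <= M)%N ->
  1 / (4 * (maxdeg e)%:R * (2 * lambda - K)) <= M%:R * (Num.ceil (M%:R / 2 : R))%:~R.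
Proof.
move=> p_path p_uniq sign_le0 p_le; set a := 2 * lambda - K.
have [a_le0|a_gt0] := lerP a 0.
  by apply: ceil_half_bound_nonpos; rewrite mulr_ge0_le0 ?mulr_ge0.
apply: (ceil_half_bound p_le); set B := _ * a.
have vertex_le v : \sum_(y | e v y) defect e sigma f v y ^+ 2 <= B.
  rewrite -deg_sGamma //; have := sGamma_le v a_gt0; rewrite -/a.
  have deg_le : (deg e v)%:R <= (maxdeg e)%:R :> R by rewrite ler_nat deg_le_maxdeg.
  have deg_ge0 : 0 <= (deg e v)%:R :> R by [].
  rewrite /B; nra.
have sum_sqr_le := walk_defect_sqr_le e_sym sigma_sign vertex_le p_path p_uniq.
have sum_ge1 : 1 <= \sum_(q <- zip (x0 :: p) p) `|defect e sigma f q.1 q.2|.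
  have := walk_defect_sum_ge sigma_sign f x0 p (mulr1 1); rewrite f_x0 !mul1r; lra.
have := sqr_sum_le_size (zip (x0 :: p) p) (fun q => `|defect e sigma f q.1 q.2|).
rewrite size_zip /= (minn_idPr (leqnSn _)) (eq_bigr _ (fun q _ => real_normK (num_real _))).
move=> cauchy_schwarz; rewrite -mulrA (le_trans _ (le_trans cauchy_schwarz _)) //.
  by rewrite expr2 mulr_ege1.
by rewrite ler_wpM2l.
Qed.

Hypothesis e_conn : connected_graph e.

Lemma diam_bound_at z :
  (forall p, path e x0 p -> last x0 p = z -> walk_sign e sigma x0 p * f z <= 0) ->
  1 / (4 * (maxdeg e)%:R * (2 * lambda - K)) <=
    (diam e)%:R * (Num.ceil ((diam e)%:R / 2 : R))%:~R.
Proof.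
move=> sign_le0; have [p p_path [p_last p_uniq p_size]] := shortest_walk (e_conn x0 z).
apply: (walk_bound p_path p_uniq); first by rewrite p_last sign_le0.
by rewrite p_size dist_le_diam.
Qed.

Lemma nonpositive_edge : exists a b, e a b /\ sigma a b * f a * f b <= 0.
Proof.
have [[a b] /andP [eab le0] | all_pos] :=
  pickP (fun q : T * T => e q.1 q.2 && (sigma q.1 q.2 * f q.1 * f q.2 <= 0)).
  by exists a, b.
exfalso; pose tau z : R := if 0 <= f z then 1 else -1.
have tau_sqr z : tau z * tau z = 1 by rewrite /tau; case: ifP; rewrite ?mulrNN mulr1.
have sigma_tau a b : e a b -> sigma a b = tau a * tau b.
  move=> eab; have := all_pos (a, b); rewrite /= eab /= => /negbT; rewrite -ltNge.
  rewrite /tau; case: (sigma_sign eab) => _ [] ->;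
    case: (lerP 0 (f a)) => ?; case: (lerP 0 (f b)) => ?;
    rewrite ?mulr1 ?mulrN1 ?mulN1r ?opprK // => ?; nra.
have x0_pos : 0 < (deg e x0)%:R * (tau x0 * f x0) :> R.
  by rewrite /tau f_x0 ler01 !mulr1 ltr0n deg_x0_gt0.
have [z] := weighted_sum0_neg (fun z => ler0n _ _) x0_pos
  (switched_eigenfunction_sum e_sym sigma_tau tau_sqr f_eigen lambda_neq0).
by rewrite /tau; case: (lerP 0 (f z)) => f_z; rewrite ?mul1r ?mulN1r ?oppr_lt0 ltNge ?f_z // ltW.
Qed.

Hypothesis e_irrefl : forall x, ~~ e x x.

Lemma succ_diam_bound :
  1 / (4 * (maxdeg e)%:R * (2 * lambda - K)) <=
    (diam e).+1%:R * (Num.ceil ((diam e).+1%:R / 2 : R))%:~R.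
Proof.
have [a [b [eab sab_le0]]] := nonpositive_edge.
(* Orienting the edge away from x0 keeps b off every shortest path to a. *)
wlog dist_le : a b eab sab_le0 / (dist e x0 a <= dist e x0 b)%N.
  move=> near_a; case: (leqP (dist e x0 a) (dist e x0 b)) => [|/ltnW]; first exact: near_a.
  apply: near_a; rewrite 1?e_sym //.
  by case: (sigma_sign eab) => <- _; rewrite mulrAC.
have [p p_path [p_last p_uniq p_size]] := shortest_walk (e_conn x0 a).
have [sign_le0 | sign_gt0] := lerP (walk_sign e sigma x0 p * f a) 0.
  apply: (walk_bound p_path p_uniq); first by rewrite p_last.
  by rewrite p_size leqW // dist_le_diam.
have b_notin : b \notin x0 :: p.
  apply/negP => /(shortest_walk_mem p_path p_uniq); rewrite p_last => /(_ p_size dist_le) ba.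
  by move: eab; rewrite ba (negbTE (e_irrefl a)).
apply: (walk_bound (p := rcons p b)).
- by rewrite rcons_path p_path p_last eab.
- by rewrite -rcons_cons rcons_uniq b_notin p_uniq.
- rewrite walk_sign_rcons last_rcons p_last edge_signE // -(pmulr_rle0 _ sign_gt0).
  have -> : walk_sign e sigma x0 p * f a * (walk_sign e sigma x0 p * sigma a b * f b) =
            walk_sign e sigma x0 p * walk_sign e sigma x0 p * (sigma a b * f a * f b) by ring.
  by rewrite walk_sign_sqr // mul1r.
- by rewrite size_rcons p_size ltnS dist_le_diam.
Qed.

Lemma balanced_nonpositive_vertex : balanced e sigma ->
  exists z, forall p, path e x0 p -> last x0 p = z -> walk_sign e sigma x0 p * f z <= 0.
Proof.
move=> sigma_bal.
have [tau tau_sqr sigma_tau] :=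
  balanced_switching e_sym e_irrefl sigma_sign x0 e_conn sigma_bal.
have x0_pos : 0 < (deg e x0)%:R * (tau x0 * (tau x0 * f x0)).
  by rewrite f_x0 mulr1 tau_sqr mulr1 ltr0n deg_x0_gt0.
have sum0 : \sum_z (deg e z)%:R * (tau x0 * (tau z * f z)) = 0.
  rewrite -[RHS](mulr0 (tau x0)).
  rewrite -[in RHS](switched_eigenfunction_sum e_sym sigma_tau tau_sqr f_eigen lambda_neq0).
  by rewrite mulr_sumr; apply: eq_bigr => z _; ring.
have [z z_neg] := weighted_sum0_neg (fun z => ler0n _ _) x0_pos sum0.
exists z => p p_path p_last.
by rewrite (walk_sign_switch sigma_tau tau_sqr p_path) p_last -mulrA ltW.
Qed.

End NormalizedEigenfunction.

Theorem corollary3p10 (R : realType) (T : finType) (e : rel T)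
  (sigma : T -> T -> R) (K lambda : R) :
  simple_graph e -> connected_graph e -> is_sign e sigma ->
  CD_inf e sigma K ->
  first_nonzero_eigenvalue e sigma lambda ->
  ((diam e).+1%:R * (Num.ceil ((diam e).+1%:R / 2 : R))%:~R
     >= 1 / (4 * (maxdeg e)%:R * (2 * lambda - K)))
  /\
  (not_simple_eigenvalue e sigma lambda \/ balanced e sigma ->
   (diam e)%:R * (Num.ceil ((diam e)%:R / 2 : R))%:~R
     >= 1 / (4 * (maxdeg e)%:R * (2 * lambda - K))).
Proof.
move=> [e_sym e_irrefl] e_conn sigma_sign sigma_CD [lambda_neq0 [h [[t h_t] h_eigen]] _].
have [f [x0 [f_eigen f_x0 f_le1 _]]] := normalized_eigenfunction h_eigen h_t.
split.
  exact: (succ_diam_bound e_sym sigma_sign sigma_CD f_eigen f_x0 f_le1 lambda_neq0 e_conn e_irrefl).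
case=> [not_simple | sigma_bal].
  have [g g_eigen [g_x0 [t' g_t']]] := not_simple_vanishing x0 not_simple.
  have [g' [x1 [g'_eigen g'_x1 g'_le1 g'_0]]] := normalized_eigenfunction g_eigen g_t'.
  apply: (diam_bound_at e_sym sigma_sign sigma_CD g'_eigen g'_x1 g'_le1 lambda_neq0 e_conn
    (z := x0)) => p _ _.
  by rewrite g'_0 // mulr0.
have [z z_le0] :=
  balanced_nonpositive_vertex e_sym sigma_sign f_eigen f_x0 lambda_neq0 e_conn e_irrefl sigma_bal.
exact: (diam_bound_at e_sym sigma_sign sigma_CD f_eigen f_x0 f_le1 lambda_neq0 e_conn z_le0).
Qed.
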